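(* Let $(X,d)$ be a complete metric space, fix $\lambda\in(0,1)$, and let $W:X\times X\times[0,1]\to P_{cl}(X)$ be a mapping such that (i) $W(x,x,\mu)=\{x\}$ for all $x\in X$, $\mu\in(0,1)$, and (ii) for $\mu\in(0,1)$ and $x,y\in X$, $W(x,y,\mu)=\{x\}$ implies $y=x$. Let $T:X\to P_{cl}(X)$ be a multivalued operator with $SFix(T)\neq\emptyset$ and let $T_W(x)=W(x,T(x),\lambda):=\bigcup_{y\in T(x)}W(x,y,\lambda)$ be the Takahashi admissible perturbation of $T$. Suppose there exist $\alpha,\beta,\gamma\ge0$ with $\alpha+\beta+\gamma<1$ such that $$H(W(x,T(x),\lambda),W(y,T(y),\lambda))\le\alpha d(x,y)+\beta D(x,W(y,T(y),\lambda))+\gamma D(y,W(x,T(x),\lambda))$$ for all $x,y\in X$. Then: (i) $Fix(T)=SFix(T)=\{x^*\}$ for some $x^*\in X$; (ii) if moreover there exists $l\in(0,1)$ with $H(T(x),\{x^*\})\le l\,H(W(x,T(x),\lambda),\{x^*\})$ for all $x\in X$, then $H(T^n(x),\{x^*\})\to0$ for each $x\in X$; (iii) if moreover there exists $L>0$ with $D(x,W(x,T(x),\lambda))\le L\,D(x,T(x))$ for all $x\in X$, then for some $\xi\in(0,1)$, $$d(x,x^* )\le\frac{(1+\gamma)L}{(1-\alpha-\beta)\xi}D(x,T(x))\quad\text{for all }x\in X.$$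
   Context: $P_{cl}(X)$ is the family of nonempty closed subsets of $X$. $Fix(T)=\{x:x\in T(x)\}$, $SFix(T)=\{x:T(x)=\{x\}\}$. For nonempty $A,B\subseteq X$: $D(a,B)=\inf_{b\in B}d(a,b)$, $e(A,B)=\sup_{a\in A}D(a,B)$, $H(A,B)=\max\{e(A,B),e(B,A)\}$. Iterates: $T^0(x)=\{x\}$, $T^n(x)=\bigcup_{y\in T^{n-1}(x)}T(y)$. *)

From Stdlib Require Import Reals.
From Coquelicot Require Import Coquelicot.
Open Scope R_scope.

Section MetricDefs.
Context {X : Type}.

Definition is_metric (d : X -> X -> R) : Prop :=
  (forall x y, 0 <= d x y) /\
  (forall x y, d x y = 0 <-> x = y) /\
  (forall x y, d x y = d y x) /\
  (forall x y z, d x z <= d x y + d y z).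

Definition cauchy_seq (d : X -> X -> R) (u : nat -> X) : Prop :=
  forall eps, 0 < eps -> exists N, forall m n, (N <= m)%nat -> (N <= n)%nat ->
    d (u m) (u n) < eps.

Definition converges_to (d : X -> X -> R) (u : nat -> X) (l : X) : Prop :=
  forall eps, 0 < eps -> exists N, forall n, (N <= n)%nat -> d (u n) l < eps.

Definition complete_metric (d : X -> X -> R) : Prop :=
  forall u, cauchy_seq d u -> exists l, converges_to d u l.

Definition nonempty (A : X -> Prop) : Prop := exists a, A a.

Definition closed_set (d : X -> X -> R) (A : X -> Prop) : Prop :=
  forall x, (forall eps, 0 < eps -> exists a, A a /\ d x a < eps) -> A x.

Definition Pcl (d : X -> X -> R) (A : X -> Prop) : Prop :=
  nonempty A /\ closed_set d A.

Definition is_singleton (A : X -> Prop) (x : X) : Prop :=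
  forall z, A z <-> z = x.

Definition singleton (x : X) : X -> Prop := fun z => z = x.

(* D(a,B) = inf_{b in B} d(a,b)  (a real number for nonempty B) *)
Definition Dist (d : X -> X -> R) (a : X) (B : X -> Prop) : R :=
  real (Glb_Rbar (fun r => exists b, B b /\ r = d a b)).

Definition excess (d : X -> X -> R) (A B : X -> Prop) : Rbar :=
  Lub_Rbar (fun r => exists a, A a /\ r = Dist d a B).

Definition Rbar_maxi (a b : Rbar) : Rbar :=
  match Rbar_le_dec a b with left _ => b | right _ => a end.

Definition Haus (d : X -> X -> R) (A B : X -> Prop) : Rbar :=
  Rbar_maxi (excess d A B) (excess d B A).

Definition is_fix (T : X -> X -> Prop) (x : X) : Prop := T x x.
Definition is_sfix (T : X -> X -> Prop) (x : X) : Prop := is_singleton (T x) x.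

Definition Wset (W : X -> X -> R -> X -> Prop) (x : X) (A : X -> Prop) (mu : R)
  : X -> Prop := fun z => exists y, A y /\ W x y mu z.

Definition TW (W : X -> X -> R -> X -> Prop) (T : X -> X -> Prop) (lam : R) (x : X)
  : X -> Prop := Wset W x (T x) lam.

Fixpoint iterT (T : X -> X -> Prop) (n : nat) (x : X) : X -> Prop :=
  match n with
  | O => fun z => z = x
  | S m => fun z => exists y, iterT T m x y /\ T y z
  end.

End MetricDefs.

(** Since [xs] is a strict fixed point, [TW xs = {xs}], so the contractive
    condition at the pair [(x, xs)] gives [(1 - gamma) d(a, xs) <= (alpha + beta) d(x, xs)]
    for every [a] in [TW x]: the perturbation pulls every point towards [xs] with
    ratio [k = (alpha + beta) / (1 - gamma) < 1].  A fixed point [x] of [T] lies in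
    [TW x] because [W(x, x, lam) = {x}], hence equals [xs].  Under the hypothesis
    of (ii), [T] itself pulls towards [xs] with ratio [l k], so its iterates shrink
    geometrically onto [xs]; under that of (iii), the triangle inequality gives
    [D(x, TW x) >= (1 - k) d(x, xs)]. *)

From Stdlib Require Import Reals Lra.
From Coquelicot Require Import Coquelicot.
Open Scope R_scope.

Lemma Rbar_mult_pos_le (l M : R) (h : Rbar) :
  0 < l -> Rbar_le h M -> Rbar_le (Rbar_mult l h) (l * M).
Proof.
  intros Hl Hh. destruct h as [h | |]; try contradiction.
  - simpl in *. apply Rmult_le_compat_l; lra.
  - rewrite Rbar_mult_comm. simpl. destruct (Rle_dec 0 l); [|lra].
    destruct (Rle_lt_or_eq_dec 0 l r); [exact I | lra].
Qed.

Lemma pow_mult_eventually_le (c a eps : R) :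
  0 <= c < 1 -> 0 <= a -> 0 < eps ->
  exists N, forall n, (N <= n)%nat -> c ^ n * a <= eps.
Proof.
  intros Hc Ha Heps.
  assert (Hlim : Rabs c < 1) by (rewrite Rabs_right; lra).
  destruct (pow_lt_1_zero c Hlim (eps / (a + 1))) as [N HN].
  { apply Rdiv_lt_0_compat; lra. }
  exists N. intros n Hn.
  specialize (HN n Hn). rewrite Rabs_right in HN by (apply Rle_ge, pow_le; lra).
  apply Rlt_div_r in HN; [|lra].
  pose proof (pow_le c n (proj1 Hc)). nra.
Qed.

Section Iterates.
Context {X : Type} (T : X -> X -> Prop).

Lemma iterT_nonempty :
  (forall x, nonempty (T x)) -> forall n x, nonempty (iterT T n x).
Proof.
  intros HT n x. induction n as [|n [y Hy]].
  - exists x. reflexivity.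
  - destruct (HT y) as [z Hz]. exists z, y. split; assumption.
Qed.

Lemma iterT_dist_le_pow (d : X -> X -> R) (xs : X) (c : R) :
  0 <= c -> (forall x z, T x z -> d z xs <= c * d x xs) ->
  forall n x z, iterT T n x z -> d z xs <= c ^ n * d x xs.
Proof.
  intros Hc HT n x. induction n as [|n IH]; intros z Hz.
  - simpl in Hz. subst z. simpl. lra.
  - destruct Hz as [y [Hy Hyz]]. simpl.
    pose proof (HT y z Hyz). pose proof (IH y Hy).
    rewrite Rmult_assoc. apply (Rle_trans _ (c * d y xs)); [assumption|].
    apply Rmult_le_compat_l; assumption.
Qed.

End Iterates.

Section PointSetDistances.
Context {X : Type} (d : X -> X -> R) (Hd : is_metric d).

Lemma Dist_glb (a : X) (B : X -> Prop) (b : X) : B b ->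
  Glb_Rbar (fun r => exists b, B b /\ r = d a b) = Finite (Dist d a B).
Proof.
  intros Bb. unfold Dist.
  set (E := fun r => exists b, B b /\ r = d a b).
  destruct (Glb_Rbar_correct E) as [Hlb Hglb].
  assert (Hup : Rbar_le (Glb_Rbar E) (d a b)) by (apply Hlb; exists b; auto).
  assert (Hlo : Rbar_le 0 (Glb_Rbar E)).
  { apply Hglb. intros r [b' [_ ->]]. apply Hd. }
  destruct (Glb_Rbar E); easy.
Qed.

Lemma Dist_le (a : X) (B : X -> Prop) (b : X) : B b -> Dist d a B <= d a b.
Proof.
  intros Bb. pose proof (Dist_glb a B b Bb) as E.
  destruct (Glb_Rbar_correct (fun r => exists b, B b /\ r = d a b)) as [Hlb _].
  assert (H : Rbar_le (Finite (Dist d a B)) (d a b)) by (rewrite <- E; apply Hlb; eauto).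
  exact H.
Qed.

Lemma Dist_ge (a : X) (B : X -> Prop) (b : X) (m : R) :
  B b -> (forall b, B b -> m <= d a b) -> m <= Dist d a B.
Proof.
  intros Bb Hm. pose proof (Dist_glb a B b Bb) as E.
  destruct (Glb_Rbar_correct (fun r => exists b, B b /\ r = d a b)) as [_ Hglb].
  assert (H : Rbar_le m (Finite (Dist d a B))).
  { rewrite <- E. apply Hglb. intros r [b' [Hb' ->]]. apply Hm, Hb'. }
  exact H.
Qed.

Lemma Dist_nonneg (a : X) (B : X -> Prop) (b : X) : B b -> 0 <= Dist d a B.
Proof. intros Bb. apply (Dist_ge a B b); [exact Bb | intros; apply Hd]. Qed.

Lemma Dist_singleton (a c : X) (B : X -> Prop) :
  is_singleton B c -> Dist d a B = d a c.
Proof.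
  intros HB. apply Rle_antisym.
  - apply Dist_le, HB. reflexivity.
  - apply (Dist_ge a B c); [apply HB; reflexivity|].
    intros b Hb. apply HB in Hb. subst b. apply Rle_refl.
Qed.

Lemma is_singleton_singleton (c : X) : is_singleton (singleton c) c.
Proof. intro z. reflexivity. Qed.

Lemma Dist_le_excess (A B : X -> Prop) (a : X) :
  A a -> Rbar_le (Dist d a B) (excess d A B).
Proof. intros Aa. apply (Lub_Rbar_correct (fun r => exists a, A a /\ r = Dist d a B)). eauto. Qed.

Lemma excess_le (A B : X -> Prop) (M : R) :
  (forall a, A a -> Dist d a B <= M) -> Rbar_le (excess d A B) M.
Proof.
  intros HM. apply (Lub_Rbar_correct (fun r => exists a, A a /\ r = Dist d a B)).
  intros r [a [Aa ->]]. apply HM, Aa.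
Qed.

Lemma excess_le_Haus (A B : X -> Prop) : Rbar_le (excess d A B) (Haus d A B).
Proof.
  unfold Haus, Rbar_maxi. destruct (Rbar_le_dec _ _); [assumption | apply Rbar_le_refl].
Qed.

Lemma Haus_le (A B : X -> Prop) (M : R) :
  Rbar_le (excess d A B) M -> Rbar_le (excess d B A) M -> Rbar_le (Haus d A B) M.
Proof. unfold Haus, Rbar_maxi. destruct (Rbar_le_dec _ _); auto. Qed.

Lemma Dist_le_Haus (A B : X -> Prop) (a : X) :
  A a -> Rbar_le (Dist d a B) (Haus d A B).
Proof. intros Aa. eapply Rbar_le_trans; [apply Dist_le_excess, Aa | apply excess_le_Haus]. Qed.

Lemma Haus_singleton_le (A : X -> Prop) (c : X) (M : R) :
  nonempty A -> (forall a, A a -> d a c <= M) -> Rbar_le (Haus d A (singleton c)) M.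
Proof.
  intros [a0 Aa0] HM. apply Haus_le; apply excess_le.
  - intros a Aa. rewrite (Dist_singleton a c); [apply HM, Aa | apply is_singleton_singleton].
  - intros c' Hc'. unfold singleton in Hc'. subst c'.
    apply (Rle_trans _ (d c a0)); [apply Dist_le, Aa0|].
    destruct Hd as (_ & _ & Hsym & _). rewrite Hsym. apply HM, Aa0.
Qed.

End PointSetDistances.

Section TakahashiPerturbation.
Context {X : Type} (d : X -> X -> R) (Hd : is_metric d)
  (W : X -> X -> R -> X -> Prop) (T : X -> X -> Prop)
  (lam alpha beta gamma : R) (xs : X).

Hypothesis W_diag : forall x, is_singleton (W x x lam) x.
Hypothesis xs_sfix : is_sfix T xs.
Hypotheses (alpha_ge0 : 0 <= alpha) (beta_ge0 : 0 <= beta) (gamma_ge0 : 0 <= gamma)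
  (coef_sum_lt1 : alpha + beta + gamma < 1).
Hypothesis TW_contraction : forall x y,
  Rbar_le (Haus d (TW W T lam x) (TW W T lam y))
    (Finite (alpha * d x y + beta * Dist d x (TW W T lam y)
             + gamma * Dist d y (TW W T lam x))).

Definition contraction_ratio : R := (alpha + beta) / (1 - gamma).

Lemma contraction_ratio_ge0 : 0 <= contraction_ratio.
Proof. apply Rdiv_le_0_compat; lra. Qed.

Lemma contraction_ratio_lt1 : contraction_ratio < 1.
Proof. apply Rlt_div_l; lra. Qed.

Lemma TW_sfix : is_singleton (TW W T lam xs) xs.
Proof.
  intro z. split.
  - intros [y [Hy Hz]]. apply xs_sfix in Hy. subst y. apply W_diag, Hz.
  - intros ->. exists xs. split; [apply xs_sfix | apply W_diag]; reflexivity.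
Qed.

Lemma TW_fix (x : X) : T x x -> TW W T lam x x.
Proof. intros Hx. exists x. split; [exact Hx | apply W_diag; reflexivity]. Qed.

Lemma TW_dist_sfix_le (x a : X) :
  TW W T lam x a -> d a xs <= contraction_ratio * d x xs.
Proof.
  intros Ha.
  destruct Hd as (_ & _ & Hsym & _).
  assert (Hbound : d a xs <= alpha * d x xs + beta * d x xs + gamma * d a xs).
  { pose proof (Rbar_le_trans _ _ _ (Dist_le_Haus d _ _ _ Ha) (TW_contraction x xs)) as H.
    simpl in H. rewrite !(Dist_singleton d Hd _ xs _ TW_sfix) in H.
    assert (Hxs : Dist d xs (TW W T lam x) <= d a xs) by (rewrite Hsym; apply (Dist_le d Hd), Ha).
    pose proof (Rmult_le_compat_l gamma _ _ gamma_ge0 Hxs). lra. }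
  unfold contraction_ratio. rewrite Rmult_comm, Rmult_div_assoc.
  apply Rle_div_r; lra.
Qed.

Lemma fix_eq_sfix (x : X) : T x x -> x = xs.
Proof.
  intros Hx. apply Hd.
  pose proof (TW_dist_sfix_le x x (TW_fix x Hx)).
  pose proof contraction_ratio_lt1. pose proof (proj1 Hd x xs). nra.
Qed.

Hypothesis T_nonempty : forall x, nonempty (T x).
Hypothesis W_nonempty : forall x y, nonempty (W x y lam).

Lemma TW_nonempty (x : X) : nonempty (TW W T lam x).
Proof.
  destruct (T_nonempty x) as [y Hy]. destruct (W_nonempty x y) as [a Ha].
  exists a, y. split; assumption.
Qed.

Lemma T_dist_sfix_le (l : R) :
  0 < l ->
  (forall x, Rbar_le (Haus d (T x) (singleton xs))
               (Rbar_mult (Finite l) (Haus d (TW W T lam x) (singleton xs)))) ->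
  forall x z, T x z -> d z xs <= l * contraction_ratio * d x xs.
Proof.
  intros Hl HT x z Hz.
  assert (HTW : Rbar_le (Haus d (TW W T lam x) (singleton xs)) (contraction_ratio * d x xs)).
  { apply Haus_singleton_le; [exact Hd | apply TW_nonempty | apply TW_dist_sfix_le]. }
  pose proof (Rbar_le_trans _ _ _ (Dist_le_Haus d _ (singleton xs) _ Hz) (HT x)) as H.
  pose proof (Rbar_le_trans _ _ _ H (Rbar_mult_pos_le _ _ _ Hl HTW)) as H'.
  simpl in H'. rewrite (Dist_singleton d Hd z xs _ (is_singleton_singleton xs)) in H'. lra.
Qed.

Lemma iterT_Haus_sfix_vanishes (l : R) :
  0 < l < 1 ->
  (forall x, Rbar_le (Haus d (T x) (singleton xs))
               (Rbar_mult (Finite l) (Haus d (TW W T lam x) (singleton xs)))) ->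
  forall x eps, 0 < eps -> exists N, forall n, (N <= n)%nat ->
    Rbar_le (Haus d (iterT T n x) (singleton xs)) (Finite eps).
Proof.
  intros Hl HT x eps Heps.
  set (c := l * contraction_ratio).
  pose proof contraction_ratio_ge0. pose proof contraction_ratio_lt1.
  assert (Hc : 0 <= c < 1) by (unfold c; split; nra).
  destruct (pow_mult_eventually_le c (d x xs) eps Hc (proj1 Hd x xs) Heps) as [N HN].
  exists N. intros n Hn.
  apply (Rbar_le_trans _ (c ^ n * d x xs)); [|apply HN, Hn].
  apply Haus_singleton_le; [exact Hd | apply iterT_nonempty, T_nonempty|].
  apply iterT_dist_le_pow; [apply Hc|]. apply (T_dist_sfix_le l); [apply Hl | exact HT].
Qed.

Lemma dist_sfix_le_Dist_TW (x : X) :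
  (1 - contraction_ratio) * d x xs <= Dist d x (TW W T lam x).
Proof.
  destruct (TW_nonempty x) as [a0 Ha0].
  apply (Dist_ge d Hd x _ a0 _ Ha0). intros b Hb.
  pose proof (TW_dist_sfix_le x b Hb). destruct Hd as (_ & _ & _ & Htri).
  pose proof (Htri x b xs). lra.
Qed.

Lemma dist_sfix_le_Dist_T (L : R) :
  (forall x, Dist d x (TW W T lam x) <= L * Dist d x (T x)) ->
  forall x, d x xs <= L / (1 - contraction_ratio) * Dist d x (T x).
Proof.
  intros HL x. pose proof contraction_ratio_lt1 as Hk.
  rewrite (Rmult_comm (L / _)), Rmult_div_assoc. apply Rle_div_r; [lra|].
  pose proof (dist_sfix_le_Dist_TW x). pose proof (HL x). lra.
Qed.

(* A smaller [xi] only weakens the bound of (iii), so [xi = (1 - (alpha + beta + gamma)) / 2] suffices. *)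
Lemma error_constant_le (L : R) :
  0 < L ->
  L / (1 - contraction_ratio)
    <= (1 + gamma) * L / ((1 - alpha - beta) * ((1 - (alpha + beta + gamma)) / 2)).
Proof.
  intros HL.
  assert (Hlhs : L / (1 - contraction_ratio) = L * (1 - gamma) / (1 - (alpha + beta + gamma))).
  { unfold contraction_ratio. field. lra. }
  assert (Hdiff : (1 + gamma) * L / ((1 - alpha - beta) * ((1 - (alpha + beta + gamma)) / 2))
                  - L * (1 - gamma) / (1 - (alpha + beta + gamma))
                  = L * (2 * (1 + gamma) - (1 - gamma) * (1 - alpha - beta))
                    / ((1 - alpha - beta) * (1 - (alpha + beta + gamma)))).
  { field. lra. }
  assert (0 <= L * (2 * (1 + gamma) - (1 - gamma) * (1 - alpha - beta))
               / ((1 - alpha - beta) * (1 - (alpha + beta + gamma)))).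
  { apply Rdiv_le_0_compat; [|nra]. apply Rmult_le_pos; nra. }
  lra.
Qed.

End TakahashiPerturbation.

Theorem mainTheorem9 (X : Type) (d : X -> X -> R) (lam : R)
  (W : X -> X -> R -> X -> Prop) (T : X -> X -> Prop) (alpha beta gamma : R) :
  is_metric d ->
  complete_metric d ->
  0 < lam < 1 ->
  (forall x y mu, 0 <= mu <= 1 -> Pcl d (W x y mu)) ->
  (forall x mu, 0 < mu < 1 -> is_singleton (W x x mu) x) ->
  (forall x y mu, 0 < mu < 1 -> is_singleton (W x y mu) x -> y = x) ->
  (forall x, Pcl d (T x)) ->
  (exists x, is_sfix T x) ->
  0 <= alpha -> 0 <= beta -> 0 <= gamma -> alpha + beta + gamma < 1 ->
  (forall x y,
     Rbar_le (Haus d (TW W T lam x) (TW W T lam y))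
       (Finite (alpha * d x y + beta * Dist d x (TW W T lam y)
                + gamma * Dist d y (TW W T lam x)))) ->
  exists xs : X,
    (* (i) Fix(T) = SFix(T) = {xs} *)
    ((forall x, is_fix T x <-> x = xs) /\ (forall x, is_sfix T x <-> x = xs)) /\
    (* (ii) *)
    ((exists l, 0 < l < 1 /\
        forall x, Rbar_le (Haus d (T x) (singleton xs))
                    (Rbar_mult (Finite l) (Haus d (TW W T lam x) (singleton xs)))) ->
     forall x, forall eps, 0 < eps -> exists N, forall n, (N <= n)%nat ->
       Rbar_le (Haus d (iterT T n x) (singleton xs)) (Finite eps)) /\
    (* (iii) *)
    (forall L, 0 < L ->
        (forall x, Dist d x (TW W T lam x) <= L * Dist d x (T x)) ->
     exists xi, 0 < xi < 1 /\
       forall x, d x xs <= (1 + gamma) * L / ((1 - alpha - beta) * xi) * Dist d x (T x)).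
Proof.
  intros Hd _ Hlam HWcl HWdiag _ HTcl [xs Hxs] Ha Hb Hg Hs Hcontr.
  assert (W_diag : forall x, is_singleton (W x x lam) x) by (intro; apply HWdiag, Hlam).
  assert (W_ne : forall x y, nonempty (W x y lam)) by (intros; apply HWcl; lra).
  assert (T_ne : forall x, nonempty (T x)) by (intro; apply HTcl).
  pose proof (fix_eq_sfix d Hd W T lam alpha beta gamma xs W_diag Hxs Ha Hb Hg Hs Hcontr)
    as fix_unique.
  exists xs. split; [split|split].
  - intro x. split; [apply fix_unique | intros ->; apply Hxs; reflexivity].
  - intro x. split; [intros Hx; apply fix_unique, Hx; reflexivity | intros ->; exact Hxs].
  - intros [l [Hl HT]]. eapply (iterT_Haus_sfix_vanishes d Hd W T lam alpha beta gamma xs); eauto.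
  - intros L HL HLb. exists ((1 - (alpha + beta + gamma)) / 2). split; [lra|].
    intro x. destruct (T_ne x) as [y Hy].
    eapply Rle_trans; [eapply (dist_sfix_le_Dist_T d Hd W T lam alpha beta gamma xs); eauto|].
    apply Rmult_le_compat_r; [eapply Dist_nonneg; eauto | apply error_constant_le; assumption].
Qed.
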